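(* Let $A \subset \mathbb{Z}$ be a finite set with $\min A = 0$, $\max A = b$, and $\gcd A = 1$. Let $\mathcal{C}_A = \{\sum_{a \in A} n_a (a,1) : n_a \in \mathbb{N}\} \subset \mathbb{Z}^2$, $\Lambda = \{(bn, m+n) : m,n \in \mathbb{Z}\}$, and $\Lambda^+ = \{(bn, m+n) : m,n \in \mathbb{N}\}$. For $a \in \{0,\ldots,b-1\}$ let $\mathcal{S}_a$ be the set of points of $\mathcal{C}_A$ congruent to $(a,1)$ modulo $\Lambda$, let $(g_a,h_a) \in \mathbb{N}^2$ be the unique point such that $\mathcal{S}_a \subseteq (g_a,h_a) + \Lambda^+$ and $E_a := ((g_a,h_a) + \Lambda^+) \setminus \mathcal{S}_a$ is finite. Then every $(n,h) \in E_a$ satisfies $h \leq 2b - 5$.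
   Context: $\mathbb{N} = \{0,1,2,\ldots\}$. The existence and uniqueness of $(g_a,h_a)$ as described is part of the setting (it is proved in the paper). *)

From HB Require Import structures.
From mathcomp Require Import all_boot all_order all_algebra.
From mathcomp Require Import finmap.
From mathcomp Require Import boolp classical_sets cardinality.
Set Implicit Arguments. Unset Strict Implicit. Unset Printing Implicit Defensive.
Import Order.TTheory GRing.Theory Num.Theory.
Local Open Scope ring_scope.
Local Open Scope classical_set_scope.

Definition coneA (A : {fset int}) : set (int * int) :=
  [set p | exists n : int -> nat,
      p.1 = \sum_(a <- A) (n a)%:Z * a /\ p.2 = \sum_(a <- A) (n a)%:Z].

Definition Lam (b : int) : set (int * int) :=
  [set p | exists m n : int, p = (b * n, m + n)].

Definition LamP (b : int) : set (int * int) :=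
  [set p | exists m n : nat, p = (b * n%:Z, m%:Z + n%:Z)].

Definition Sa (A : {fset int}) (b a : int) : set (int * int) :=
  [set p | coneA A p /\ Lam b (p.1 - a, p.2 - 1)].

Definition shiftLamP (b g h : int) : set (int * int) :=
  [set p | LamP b (p.1 - g, p.2 - h)].

Definition Ea (A : {fset int}) (b a g h : int) : set (int * int) :=
  shiftLamP b g h `\` Sa A b a.

From HB Require Import structures.
From mathcomp Require Import all_boot all_order all_algebra.
From mathcomp Require Import finmap.
From mathcomp Require Import boolp classical_sets cardinality.
From mathcomp Require Import zify.
Set Implicit Arguments. Unset Strict Implicit. Unset Printing Implicit Defensive.
Import Order.TTheory GRing.Theory Num.Theory.

(* A point (n, k) of C_A is a multiset of k elements of A (all in [0, b]) with
   sum n.  Zeros can be dropped and copies of b set aside; if b or more elements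
   of (0, b) remain, two of their prefix sums agree mod b, and the block between
   them, of sum q b with q smaller than its length, can be traded for q copies
   of b.  Hence (n, k) is in C_A iff n = c b + sum o with c + |o| <= k for some
   o in A with entries in (0, b) and |o| < b.
   For (n, k) in E_a, finiteness of E_a puts (n, k + j) and
   (n + b (T + 1), k + T + 1) in S_a for some j, T.  Since (n, k) is not in C_A,
   the normal form of the second point forces n + b <= (b - 1)^2; the normal
   form of the first then has c <= b - 3, so (n, 2b - 4) is in C_A and
   k < 2b - 4. *)

Lemma sumn_le_mul_size (B : nat) (s : seq nat) :
  all (fun y => y <= B) s -> sumn s <= B * size s.
Proof. by elim: s => [|y s IH] //= /andP[hy /IH]; lia. Qed.

Lemma prefix_sums_eq_mod (B : nat) (o : seq nat) : 0 < B -> B <= size o ->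
  exists i j, i < j <= size o /\ sumn (take i o) = sumn (take j o) %[mod B].
Proof.
move=> B_gt0 leBo.
pose f (i : 'I_B.+1) : 'I_B := Ordinal (ltn_pmod (sumn (take i o)) B_gt0).
have /injectivePn [i [j neq_ij /(congr1 val) /= eq_ij]] : ~~ injectiveb f.
  by apply/injectiveP => /leq_card; rewrite !card_ord ltnn.
have [lt_ij | lt_ji | /val_inj eq] := ltngtP i j; last by rewrite eq eqxx in neq_ij.
- by exists i, j; split => //; rewrite lt_ij /=; have := ltn_ord j; lia.
- by exists j, i; split => //; rewrite lt_ji /=; have := ltn_ord i; lia.
Qed.

Lemma exchange_block (B : nat) (o : seq nat) : 0 < B ->
  all (fun y => 0 < y < B) o -> B <= size o ->
  exists o' q, [/\ {subset o' <= o}, sumn o = sumn o' + q * B & size o' + q < size o].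
Proof.
move=> B_gt0 o_mid leBo.
have [i [j [/andP[lt_ij le_jo] eq_ij]]] := prefix_sums_eq_mod B_gt0 leBo.
set blk := drop i (take j o).
have take_j : take j o = take i o ++ blk.
  by rewrite -{1}(cat_take_drop i (take j o)) take_takel // ltnW.
have size_blk : size blk = j - i by rewrite size_drop size_take; case: ltnP; lia.
have dvd_blk : B %| sumn blk.
  move/eqP: eq_ij; rewrite take_j sumn_cat eq_sym eqn_mod_dvd ?leq_addr //.
  by rewrite addKn.
have blk_lt : sumn blk <= B.-1 * size blk.
  apply/sumn_le_mul_size/allP => y /mem_drop /mem_take /(allP o_mid); lia.
exists (take i o ++ drop j o), (sumn blk %/ B); split.
- by move=> y; rewrite mem_cat => /orP[/mem_take | /mem_drop].
- by rewrite divnK // -{1}(cat_take_drop j o) take_j !sumn_cat; lia.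
- rewrite size_cat size_take size_drop ifT; last by apply: leq_trans le_jo.
  have : sumn blk %/ B < j - i.
    rewrite ltn_divLR //; move: blk_lt; rewrite size_blk.
    case: (B) B_gt0 => // B' _ /=; nia.
  (* [set] merges the two syntactically different [size o] terms for lia. *)
  move: (sumn blk %/ B) => q; set n := size o in le_jo *; lia.
Qed.

Lemma sumn_normal_form (B : nat) (P : pred nat) (s : seq nat) :
  0 < B -> P B -> (forall y, P y -> y <= B) -> all P s ->
  exists c o, [/\ all P o, all (fun y => 0 < y < B) o, size o < B,
                  sumn s = c * B + sumn o & c + size o <= size s].
Proof.
move=> B_gt0 PB P_le; have [K] := ubnP (size s).
elim: K s => // K IH s /ltnSE le_sK sP.
have rem_small y : y \in s -> size (rem y s) < size s.
  by move=> ys; rewrite size_rem //; case: s ys {IH sP le_sK}.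
have remP y : all P (rem y s) by apply/allP => x /mem_rem /(allP sP).
have sumn_rem y : y \in s -> sumn s = y + sumn (rem y s).
  by move=> ys; rewrite (perm_sumn (perm_to_rem ys)).
have [s0 | s_nz] := boolP (0 \in s).
  have [c [o [oP o_mid o_lt e_rem le_rem]]] :=
    IH _ (leq_trans (rem_small 0 s0) le_sK) (remP 0).
  exists c, o; split => //; first by rewrite (sumn_rem 0 s0).
  exact: leq_trans le_rem (ltnW (rem_small 0 s0)).
have [sB | s_nB] := boolP (B \in s).
  have [c [o [oP o_mid o_lt e_rem le_rem]]] :=
    IH _ (leq_trans (rem_small B sB) le_sK) (remP B).
  exists c.+1, o; split => //; first by rewrite (sumn_rem B sB) e_rem mulSn addnA.
  by rewrite addSn; apply: leq_ltn_trans le_rem (rem_small B sB).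
have s_mid : all (fun y => 0 < y < B) s.
  apply/allP => y ys; rewrite lt0n ltn_neqAle P_le ?(allP sP) // andbT.
  by apply/andP; split; [apply: contraNneq s_nz => <- | apply: contraNneq s_nB => <-].
have [lt_sB | le_Bs] := ltnP (size s) B; first by exists 0, s; split.
have [o' [q [sub_o' e_o' lt_o']]] := exchange_block B_gt0 s_mid le_Bs.
have o'P : all P o' by apply/allP => y /sub_o' /(allP sP).
have lt_o's : size o' < size s := leq_ltn_trans (leq_addr _ _) lt_o'.
have [c [o [oP o_mid o_lt e_c le_c]]] := IH o' (leq_trans lt_o's le_sK) o'P.
exists (c + q), o; split => //; first by rewrite e_o' e_c mulnDl addnAC.
by rewrite addnAC; apply: leq_trans (leq_add le_c (leqnn q)) (ltnW lt_o').
Qed.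

Local Open Scope ring_scope.
Local Open Scope classical_set_scope.

Definition nat_in (A : {fset int}) : pred nat := fun y => y%:Z \in A.

Section Cone.
Variable A : {fset int}.

Lemma coneA0 : coneA A (0, 0).
Proof. by exists (fun=> 0%N); rewrite /= !big1 // => y _; rewrite mul0r. Qed.

Lemma coneAD1 (x k a : int) : a \in A -> coneA A (x, k) -> coneA A (x + a, k + 1).
Proof.
move=> aA [n /= [-> ->]]; rewrite /coneA; exists (fun y => n y + (y == a))%N => /=.
have indicator (F : int -> int) : \sum_(y <- A) (y == a)%:Z * F y = F a.
  rewrite (bigD1_seq a aA (fset_uniq A)) /= eqxx mul1r big1 ?addr0 // => y /negbTE->.
  by rewrite mul0r.
split; under [RHS]eq_bigr do rewrite PoszD ?mulrDl; rewrite big_split /=.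
  by rewrite (indicator id).
by rewrite -(indicator (fun=> 1)); congr (_ + _); apply: eq_bigr => y _; rewrite mulr1.
Qed.

Lemma coneA_sumn (s : seq nat) : all (nat_in A) s ->
  coneA A ((sumn s)%:Z, (size s)%:Z).
Proof.
elim: s => [|y s IH] /=; first by move=> _; apply: coneA0.
case/andP=> yA /IH /(coneAD1 yA).
by rewrite -addn1 !PoszD addrC.
Qed.

Hypothesis A0 : 0 \in A.

Lemma coneA_pad (x : int) (k k' : nat) :
  coneA A (x, k%:Z) -> (k <= k')%N -> coneA A (x, k'%:Z).
Proof.
move=> cone_k; elim: k' => [|k' IH]; first by rewrite leqn0 => /eqP <-.
rewrite leq_eqVlt => /predU1P [<- // | /IH /(coneAD1 A0)].
by rewrite addr0 -addn1 PoszD.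
Qed.

Hypothesis A_ge0 : forall x, x \in A -> 0 <= x.

Lemma coneA_sumnP (x k : int) : coneA A (x, k) ->
  exists2 s : seq nat, all (nat_in A) s & x = (sumn s)%:Z /\ k = (size s)%:Z.
Proof.
case=> n /= [-> ->]; have : {subset (A : seq int) <= A} by [].
elim: (A : seq int) => [|y r IH] sub_r; first by exists [::]; rewrite ?big_nil.
have yA : y \in A by apply: sub_r; rewrite mem_head.
rewrite !big_cons; have [|s sA [-> ->]] := IH.
  by move=> z zr; apply: sub_r; rewrite inE zr orbT.
exists (nseq (n y) `|y|%N ++ s).
  rewrite all_cat sA andbT; apply/allP => z /nseqP [-> _].
  by rewrite /nat_in gez0_abs ?A_ge0.
rewrite sumn_cat size_cat sumn_nseq size_nseq !PoszD PoszM.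
by rewrite gez0_abs ?A_ge0 // mulrC.
Qed.

Variable B : nat.
Hypotheses (B_gt0 : (0 < B)%N) (AB : B%:Z \in A).
Hypothesis A_leB : forall x, x \in A -> x <= B%:Z.

Lemma coneA_normal_form (x k : nat) : coneA A (x%:Z, k%:Z) ->
  exists c o, [/\ all (nat_in A) o, all (fun y => 0 < y < B)%N o, (size o < B)%N,
                  x = (c * B + sumn o)%N & (c + size o <= k)%N].
Proof.
case/coneA_sumnP => s sA [[->] [->]].
by apply: sumn_normal_form => // y /A_leB; rewrite lez_nat.
Qed.

Lemma coneA_of_normal_form (c k : nat) (o : seq nat) :
  all (nat_in A) o -> (c + size o <= k)%N -> coneA A ((c * B + sumn o)%:Z, k%:Z).
Proof.
move=> oA le_k; apply: coneA_pad _ le_k.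
have := @coneA_sumn (nseq c B ++ o).
rewrite sumn_cat size_cat sumn_nseq size_nseq mulnC; apply.
by rewrite all_cat oA andbT; apply/allP => y /nseqP [-> _].
Qed.

Lemma coneA_shift_bound (n k T : nat) :
  coneA A ((n + B * T.+1)%:Z, (k + T.+1)%:Z) -> ~ coneA A (n%:Z, k%:Z) ->
  (n + B <= B.-1 * B.-1)%N.
Proof.
move=> /coneA_normal_form [c [o [oA o_mid o_lt e_n le_k]]] not_cone.
have [lt_Tc | le_cT] := ltnP T c.
  case: not_cone; have -> : n = ((c - T.+1) * B + sumn o)%N by move: e_n; nia.
  by apply: coneA_of_normal_form oA _; lia.
have o_le : (sumn o <= B.-1 * size o)%N.
  by apply/sumn_le_mul_size/allP => y /(allP o_mid); lia.
have : (B.-1 * size o <= B.-1 * B.-1)%N by rewrite leq_mul2l; lia.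
move: e_n; nia.
Qed.

Lemma coneA_low_height (n k : nat) : coneA A (n%:Z, k%:Z) ->
  (n + B <= B.-1 * B.-1)%N -> coneA A (n%:Z, (2 * B - 4)%:Z).
Proof.
move=> /coneA_normal_form [c [o [oA _ o_lt -> _]]] le_n.
apply: coneA_of_normal_form oA _.
have : (c.+1 * B < B.-1 * B)%N by move: le_n; case: (B) B_gt0 => // B' _; nia.
rewrite ltn_mul2r B_gt0 /=; lia.
Qed.

End Cone.

Lemma Sa_of_coneA (A : {fset int}) (b a x y y' : int) :
  Sa A b a (x, y) -> coneA A (x, y') -> Sa A b a (x, y').
Proof.
move=> [_ [m [N /= [e_x _]]]] cone_y'; split=> //.
by exists (y' - 1 - N), N; rewrite /= e_x; congr pair; lia.
Qed.

Lemma shiftLamP_up (b g h x y : int) (j : nat) :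
  shiftLamP b g h (x, y) -> shiftLamP b g h (x, y + j%:Z).
Proof.
move=> [m [N /= [e_x e_y]]]; exists (m + j)%N, N.
by rewrite /= e_x; congr pair; rewrite PoszD; lia.
Qed.

Lemma shiftLamP_diag (b g h x y : int) (j : nat) :
  shiftLamP b g h (x, y) -> shiftLamP b g h (x + b * j%:Z, y + j%:Z).
Proof.
move=> [m [N /= [e_x e_y]]]; exists m, (N + j)%N.
by rewrite /= PoszD mulrDr -e_x; congr pair; lia.
Qed.

Lemma finite_setD_meets (T : Type) (X Y : set T) (f : nat -> T) :
  finite_set (X `\` Y) -> injective f -> (forall j, X (f j)) -> exists j, Y (f j).
Proof.
move=> finXY f_inj Xf; apply: contrapT => noY.
have : finite_set (f @^-1` (X `\` Y)) by apply: finite_preimage => // i j _ _ /f_inj.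
suff -> : f @^-1` (X `\` Y) = setT by apply: infinite_nat.
by apply/seteqP; split => // j _; split => // Yf; apply: noY; exists j.
Qed.

Theorem corollary5p3 (A : {fset int}) (b : int)
  (hmin_in : 0 \in A) (hmin : forall x, x \in A -> 0 <= x)
  (hmax_in : b \in A) (hmax : forall x, x \in A -> x <= b)
  (hgcd : \big[gcdn/0%N]_(x <- A) `|x|%N = 1%N)
  (a : int) (ha0 : 0 <= a) (hab : a < b)
  (g h : nat)
  (hsub : Sa A b a `<=` shiftLamP b g%:Z h%:Z)
  (hfin : finite_set (Ea A b a g%:Z h%:Z)) :
  forall n k : int, Ea A b a g%:Z h%:Z (n, k) -> k <= 2 * b - 5.
Proof.
move=> n k [Enk notSa]; have [B bB] : {B : nat | b = B%:Z} by exists `|b|%N; lia.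
subst b; have B_gt0 : (0 < B)%N by lia.
have [n' [kk [en ek]]] : exists n' kk : nat, n = n'%:Z /\ k = kk%:Z.
  by case: Enk => [m [t /= [en ek]]]; exists (g + B * t)%N, (h + (m + t))%N; lia.
subst n k.
have [j0 Sa_j0] : exists j : nat, Sa A B%:Z a (n'%:Z, kk%:Z + j%:Z).
  by apply: (finite_setD_meets hfin) => [i j [] | j]; [lia | exact: shiftLamP_up].
have not_cone : ~ coneA A (n'%:Z, kk%:Z) by move/(Sa_of_coneA Sa_j0).
have [T [cone_T _]] : exists j : nat,
    Sa A B%:Z a (n'%:Z + B%:Z * j.+1%:Z, kk%:Z + j.+1%:Z).
  by apply: (finite_setD_meets hfin) => [i j [] | j]; [lia | exact: shiftLamP_diag].
rewrite -PoszM -!PoszD in cone_T; case: Sa_j0; rewrite -PoszD => cone_j0 _.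
have le_n := coneA_shift_bound hmin_in hmin B_gt0 hmax_in hmax cone_T not_cone.
have low := coneA_low_height hmin_in hmin B_gt0 hmax_in hmax cone_j0 le_n.
suff : ~ (2 * B - 4 <= kk)%N by lia.
by move/(coneA_pad hmin_in low).
Qed.
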